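(* For every integer $d\ge5$ there exists a graded Artinian level algebra $A=k[x_1,x_2,x_3]/I$ with $\dim_k A_1=3$ whose Hilbert function $(h_0,h_1,\dots)$ satisfies $h_{d-1}>h_d=h_{d+1}=2d+4$.
   Context: $k$ is an infinite field of characteristic $0$; $h_i=\dim_kA_i$. A graded Artinian algebra is level if its socle $\{a:a\mathfrak m=0\}$ ($\mathfrak m$ the maximal homogeneous ideal) is concentrated in a single degree. *)

From HB Require Import structures.
From mathcomp Require Import all_boot all_order all_algebra.
From mathcomp Require Export mpoly.
Set Implicit Arguments. Unset Strict Implicit. Unset Printing Implicit Defensive.
Import GRing.Theory.
Local Open Scope ring_scope.

(* The polynomial ring S = k[x_1,x_2,x_3] is {mpoly k[3]}; 'X_j, j : 'I_3,
   are the variables.  An ideal I is given by its membership predicate. *)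

Definition homog_ideal (k : fieldType) (I : {mpoly k[3]} -> Prop) : Prop :=
  [/\ I 0,
      (forall p q, I p -> I q -> I (p + q)),
      (forall p q, I p -> I (q * p)) &
      (forall p d, I p -> I (pihomog mdeg d p))].

(* S_i is the finite-dimensional k-space (dhomog 3 k i) of homogeneous
   polynomials of degree i, I_i = I ∩ S_i (a subspace W), and
   dim A_i = dim S_i - dim I_i. *)
Definition hilb (k : fieldType) (I : {mpoly k[3]} -> Prop) (i n : nat) : Prop :=
  exists W : {vspace dhomog 3 k i},
    (forall v : dhomog 3 k i, v \in W <-> I (v : {mpoly k[3]})) /\
    n = (\dim (fullv : {vspace dhomog 3 k i}) - \dim W)%N.

(* A = S/I is Artinian: A_i = 0 for all large i, i.e. every homogeneous
   polynomial of large degree lies in I. *)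
Definition artinian (k : fieldType) (I : {mpoly k[3]} -> Prop) : Prop :=
  exists N : nat, forall (i : nat) (p : {mpoly k[3]}),
    (N <= i)%N -> p \is i.-homog -> I p.

(* A = S/I is level: its socle {a in A : a m = 0} (m = (x1,x2,x3)) is
   concentrated in a single degree s, i.e. every socle element is (the
   class of) a homogeneous element of degree s. *)
Definition level (k : fieldType) (I : {mpoly k[3]} -> Prop) : Prop :=
  exists s : nat, forall p : {mpoly k[3]},
    (forall j : 'I_3, I ('X_j * p)) ->
    exists q : {mpoly k[3]}, q \is s.-homog /\ I (p - q).

(* Macaulay duality, with polynomials acting on the dual by contraction.  Take the inverse system generated in
   the single degree d+1 by F = x^2 y^2 z^(d-3) + y^d z + y z^d together with
   all monomials of degree d+1 in k[x,y] and in k[x,z]; its annihilator I is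
   a homogeneous ideal with A = S/I Artinian and level of socle degree d+1.
   In degree i <= d+1, A_i is dual to the span of the order-(d+1-i)
   contractions of the generators: the monomials contribute the 2i+1
   monomials of degree i in k[x,y] and k[x,z], and modulo those the
   contractions of F contribute 1, 3 and 6 independent forms in degrees
   d+1, d and d-1.  Hence h_(d+1) = h_d = 2d+4 < 2d+5 = h_(d-1), and h_1 = 3. *)

From HB Require Import structures.
From mathcomp Require Import all_boot all_order all_algebra.
From mathcomp Require Import mpoly.
From mathcomp Require Import zify.
Set Implicit Arguments. Unset Strict Implicit. Unset Printing Implicit Defensive.
Import GRing.Theory.
Local Open Scope ring_scope.

Section Contraction.
Variables (n : nat) (R : nzRingType).
Implicit Types (p q r v : {mpoly R[n]}) (b g m : 'X_{1..n}) (G : seq 'X_{1..n}).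

Definition pairing G v : R := \sum_(g <- G) v@_g.

(* [p] annihilates, under contraction, the dual generator [\sum_(g <- G) x^g]:
   for every [q], the contraction of [q * p] against it has no constant term. *)
Definition dual_ann G p : Prop := forall q, pairing G (q * p) = 0.

Lemma pairingD G : {morph pairing G : u v / u + v}.
Proof. by move=> u v; rewrite -big_split; apply: eq_bigr => g _; rewrite mcoeffD. Qed.

Lemma pairingB G : {morph pairing G : u v / u - v}.
Proof. by move=> u v; rewrite -sumrB; apply: eq_bigr => g _; rewrite mcoeffB. Qed.

Lemma pairingZ G c v : pairing G (c *: v) = c * pairing G v.
Proof. by rewrite mulr_sumr; apply: eq_bigr => g _; rewrite mcoeffZ. Qed.

Lemma pairing_sum G (I : Type) (s : seq I) (P : pred I) (f : I -> {mpoly R[n]}) :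
  pairing G (\sum_(x <- s | P x) f x) = \sum_(x <- s | P x) pairing G (f x).
Proof.
apply: (big_morph _ (pairingD G)).
by rewrite /pairing big1 // => g _; rewrite mcoeff0.
Qed.

Lemma pairingXX G b m :
  pairing G ('X_[b] * 'X_[m]) = \sum_(g <- G) ((b + m)%MM == g)%:R.
Proof. by rewrite -mpolyXD; apply: eq_bigr => g _; rewrite mcoeffX. Qed.

Lemma mcoeffXM b v g : ('X_[b] * v)@_g = if (b <= g)%MM then v@_(g - b) else 0.
Proof.
case: ifP => hb; first by rewrite -{1}(submK hb) addmC -commr_mpolyX mcoeffMX.
apply/eqP; apply: contraFT hb => hg.
have : g \in msupp (v * 'X_[b]) by rewrite mcoeff_msupp commr_mpolyX.
by rewrite (perm_mem (msuppMX v b)) => /mapP [m _ ->]; exact: lem_addr.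
Qed.

Lemma mdeg_subm b g : (b <= g)%MM -> mdeg (g - b) = (mdeg g - mdeg b)%N.
Proof. by move=> h; rewrite -{2}(submK h) mdegD addnK. Qed.

Lemma mcoeffM_dhomog_lt q p e g :
  p \is e.-homog -> (mdeg g < e)%N -> (q * p)@_g = 0.
Proof.
move=> hp hg; rewrite mcoeffM big1 // => m /eqP hm.
rewrite (dhomog_nemf_coeff hp) ?mulr0 //.
by apply/eqP => he; move: hg; rewrite hm mdegD he; lia.
Qed.

Lemma mcoeff_pihomog p e m :
  (pihomog mdeg e p)@_m = if mdeg m == e then p@_m else 0.
Proof.
rewrite pihomogE raddf_sum big_mkcond /=.
case: ifP => hm; [rewrite {3}(mpolyE p) raddf_sum /=; apply: eq_bigr | apply: big1]
  => m' _; case: ifP => h' //; rewrite mcoeffZ mcoeffX;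
  case: (m' =P m) => [e'|]; rewrite ?mulr0 //; by rewrite e' hm in h'.
Qed.

Lemma mcoeffM_pihomog q p e g : (e <= mdeg g)%N ->
  (q * pihomog mdeg e p)@_g = (pihomog mdeg (mdeg g - e) q * p)@_g.
Proof.
move=> he; rewrite !mcoeffM; apply: eq_bigr => m /eqP hm; rewrite !mcoeff_pihomog.
have -> : (mdeg m.1 == mdeg g - e)%N = (mdeg m.2 == e).
  have : mdeg g = (mdeg m.1 + mdeg m.2)%N by rewrite {1}hm mdegD.
  by move=> hg; apply/eqP/eqP; lia.
by case: ifP; rewrite ?mulr0 ?mul0r.
Qed.

Lemma dual_annP G p : dual_ann G p <-> forall m, pairing G ('X_[m] * p) = 0.
Proof.
split=> [h m | h q]; first exact: h.
rewrite (mpolyE q) mulr_suml pairing_sum big1 // => m _.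
by rewrite -scalerAl pairingZ h mulr0.
Qed.

Lemma dual_ann0 G : dual_ann G 0.
Proof. by move=> q; rewrite mulr0 /pairing big1 // => g _; rewrite mcoeff0. Qed.

Lemma dual_annD G p p' : dual_ann G p -> dual_ann G p' -> dual_ann G (p + p').
Proof. by move=> h h' q; rewrite mulrDr pairingD h h' addr0. Qed.

Lemma dual_annMl G r p : dual_ann G p -> dual_ann G (r * p).
Proof. by move=> h q; rewrite mulrA. Qed.

Variables (s : nat) (G : seq 'X_{1..n}).
Hypothesis G_deg : {in G, forall g, mdeg g = s}.

Lemma dual_ann_dhomog_gt p e : p \is e.-homog -> (s < e)%N -> dual_ann G p.
Proof.
move=> hp he q; rewrite /pairing big_seq big1 // => g /G_deg hg.
by apply: (mcoeffM_dhomog_lt _ hp); rewrite hg.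
Qed.

Lemma dual_ann_pihomog p e : dual_ann G p -> dual_ann G (pihomog mdeg e p).
Proof.
move=> h q; have [hes | hse] := leqP e s.
  2: exact: dual_ann_dhomog_gt (pihomogP _ _ _) hse q.
rewrite /pairing big_seq (eq_bigr (fun g => (pihomog mdeg (s - e) q * p)@_g)).
  by rewrite -big_seq; exact: h.
by move=> g /G_deg hg; rewrite mcoeffM_pihomog hg.
Qed.

Lemma dual_ann_dhomogP v i : v \is i.-homog ->
  dual_ann G v <-> forall b, (mdeg b + i = s)%N -> pairing G ('X_[b] * v) = 0.
Proof.
move=> hv; rewrite dual_annP; split=> [h b _ | h b]; first exact: h.
have [/h // | hb] := eqVneq (mdeg b + i)%N s.
have hXv : 'X_[b] * v \is (mdeg b + i).-homog by rewrite dhomogM ?dhomogX.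
rewrite /pairing big_seq big1 // => g /G_deg hg.
by apply: (dhomog_nemf_coeff hXv); move: hb; rewrite -hg eq_sym.
Qed.

Lemma dual_ann_socle p : (forall j, dual_ann G ('X_j * p)) ->
  dual_ann G (p - pihomog mdeg s p).
Proof.
move=> h; apply/dual_annP => m; have [-> | m_neq0] := eqVneq m 0%MM.
  rewrite mpolyX0 mul1r /pairing big_seq big1 // => g /G_deg hg.
  by rewrite mcoeffB mcoeff_pihomog hg eqxx subrr.
have [j hj | m_eq0] := pickP (fun j => m j != 0%N); last first.
  by case/eqP: m_neq0; apply/mnmP => j; rewrite mnm0E; apply/eqP/negbFE/m_eq0.
have hjm : (U_(j) <= m)%MM by rewrite lep1mP.
rewrite -(submK hjm) mpolyXD -mulrA !mulrBr pairingB h sub0r.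
rewrite /pairing big_seq big1 ?oppr0 // => g /G_deg hg.
apply: (mcoeffM_dhomog_lt _ (e := s.+1)); last by rewrite hg.
apply: (dhomogM (d := 1%N)); last exact: pihomogP.
by rewrite dhomogX; apply/eqP; exact: mdeg1.
Qed.

End Contraction.

Definition ann_inv_sys n (R : nzRingType) (gens : seq 'X_{1..n} -> Prop)
  (p : {mpoly R[n]}) : Prop := forall G, gens G -> dual_ann G p.

Section AnnihilatorIdeal.
Variables (k : fieldType) (s : nat) (gens : seq 'X_{1..3} -> Prop).
Hypothesis gens_deg : forall G, gens G -> {in G, forall g, mdeg g = s}.

Lemma ann_inv_sys_homog_ideal : homog_ideal (@ann_inv_sys 3 k gens).
Proof.
split=> [G _ | p q hp hq G hG | p q hp G hG | p e hp G hG].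
- exact: dual_ann0.
- exact: dual_annD (hp G hG) (hq G hG).
- exact: dual_annMl (hp G hG).
- exact (dual_ann_pihomog (gens_deg hG) e (hp G hG)).
Qed.

Lemma ann_inv_sys_artinian : artinian (@ann_inv_sys 3 k gens).
Proof.
by exists s.+1 => e p he hp G hG; exact (dual_ann_dhomog_gt (gens_deg hG) hp he).
Qed.

Lemma ann_inv_sys_level : level (@ann_inv_sys 3 k gens).
Proof.
exists s => p hp; exists (pihomog mdeg s p); split; first exact: pihomogP.
by move=> G hG; apply: (dual_ann_socle (gens_deg hG)) => j; exact: hp.
Qed.

End AnnihilatorIdeal.

Definition ix : 'I_3 := @Ordinal 3 0 isT.
Definition iy : 'I_3 := @Ordinal 3 1 isT.
Definition iz : 'I_3 := @Ordinal 3 2 isT.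

Definition mnm3 (a b c : nat) : 'X_{1..3} :=
  [multinom nth 0%N [:: a; b; c] j | j < 3].

Lemma mnm3x a b c : mnm3 a b c ix = a. Proof. by rewrite mnmE. Qed.
Lemma mnm3y a b c : mnm3 a b c iy = b. Proof. by rewrite mnmE. Qed.
Lemma mnm3z a b c : mnm3 a b c iz = c. Proof. by rewrite mnmE. Qed.

Lemma ord3P (P : 'I_3 -> Prop) : P ix -> P iy -> P iz -> forall j, P j.
Proof.
move=> Px Py Pz [[|[|[|j]]] hj] //.
- by rewrite (_ : Ordinal hj = ix) //; apply: val_inj.
- by rewrite (_ : Ordinal hj = iy) //; apply: val_inj.
- by rewrite (_ : Ordinal hj = iz) //; apply: val_inj.
Qed.

Lemma mnm3_eta (m : 'X_{1..3}) : m = mnm3 (m ix) (m iy) (m iz).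
Proof. by apply/mnmP; apply: ord3P; rewrite ?mnm3x ?mnm3y ?mnm3z. Qed.

Lemma eq_mnm3 a b c a' b' c' :
  (mnm3 a b c == mnm3 a' b' c') = [&& a == a', b == b' & c == c'].
Proof.
apply/eqP/and3P => [e | [/eqP-> /eqP-> /eqP->]] //.
have cf (j : 'I_3) : mnm3 a b c j = mnm3 a' b' c' j by rewrite e.
move: (cf ix) (cf iy) (cf iz); rewrite !mnm3x !mnm3y !mnm3z => -> -> ->.
by rewrite !eqxx.
Qed.

Lemma mnm3D a b c a' b' c' :
  (mnm3 a b c + mnm3 a' b' c')%MM = mnm3 (a + a') (b + b') (c + c').
Proof. by apply/mnmP; apply: ord3P; rewrite mnmDE ?mnm3x ?mnm3y ?mnm3z. Qed.

Lemma mdeg_mnm3 a b c : mdeg (mnm3 a b c) = (a + b + c)%N.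
Proof. by rewrite mdegE !big_ord_recr big_ord0 /= !mnmE /= add0n. Qed.

Definition xy_or_xz (m : 'X_{1..3}) := (m iy == 0%N) || (m iz == 0%N).

Definition xy_xz_mnm (i j : nat) : 'X_{1..3} :=
  if (j <= i)%N then mnm3 (i - j) j 0 else mnm3 (2 * i - j) 0 (j - i).

Lemma mdeg_xy_xz_mnm i j : (j < 2 * i + 1)%N -> mdeg (xy_xz_mnm i j) = i.
Proof. by rewrite /xy_xz_mnm; case: ifP => h hj; rewrite mdeg_mnm3; lia. Qed.

Lemma xy_or_xz_mnm i j : xy_or_xz (xy_xz_mnm i j).
Proof.
by rewrite /xy_xz_mnm /xy_or_xz; case: ifP => _; rewrite ?mnm3y ?mnm3z eqxx ?orbT.
Qed.

Lemma xy_xz_mnm_inj i j j' : (j < 2 * i + 1)%N -> (j' < 2 * i + 1)%N ->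
  xy_xz_mnm i j = xy_xz_mnm i j' -> j = j'.
Proof.
rewrite /xy_xz_mnm => hj hj'; case: ifP => h1; case: ifP => h2 /eqP;
  rewrite eq_mnm3 => /and3P [/eqP e1 /eqP e2 /eqP e3]; lia.
Qed.

Lemma xy_xz_mnm_surj i a : mdeg a = i -> xy_or_xz a ->
  exists2 j, (j < 2 * i + 1)%N & a = xy_xz_mnm i j.
Proof.
rewrite [a]mnm3_eta mdeg_mnm3 /xy_or_xz mnm3y mnm3z /xy_xz_mnm.
move: (a ix) (a iy) (a iz) => x y z hd hyz.
have [z0 | z_gt0] := posnP z.
  exists y; first lia.
  have -> : (y <= i)%N by lia.
  by congr mnm3; lia.
have y0 : y = 0%N by case/orP: hyz => /eqP; lia.
exists (i + z)%N; first lia.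
have -> : (i + z <= i)%N = false by lia.
by congr mnm3; lia.
Qed.

(* The dual generators [\sum_(g <- F) x^g] and [x^g] for each [g] of degree [s]
   in [k[x,y] ∪ k[x,z]]. *)
Definition inv_sys (s : nat) (F G : seq 'X_{1..3}) : Prop :=
  G = F \/ exists2 g, mdeg g = s /\ xy_or_xz g & G = [:: g].

Lemma inv_sys_deg s F : {in F, forall g, mdeg g = s} ->
  forall G, inv_sys s F G -> {in G, forall g, mdeg g = s}.
Proof. by move=> F_deg G [-> // | [g [hg _] ->] g']; rewrite mem_seq1 => /eqP ->. Qed.

Lemma hilb_of_coords (k : fieldType) (I : {mpoly k[3]} -> Prop) i m
    (f : {linear {mpoly k[3]} -> 'rV[k]_m}) :
  (forall v, v \is i.-homog -> I v <-> f v = 0) ->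
  (forall w, exists2 v, v \is i.-homog & f v = w) ->
  hilb I i m.
Proof.
move=> ker_f surj_f; pose g := linfun (f \o val : dhomog 3 k i -> 'rV[k]_m).
exists (lker g); split.
  by move=> v; rewrite memv_ker lfunE (ker_f _ (dhomog_is_dhomog v)); split=> /eqP.
have img_g : limg g = fullv.
  apply/vspaceP => w; rewrite memvf; have [v hv <-] := surj_f w.
  by rewrite (_ : f v = g (Sub v hv)) ?memv_img ?memvf // lfunE.
have := limg_ker_dim g fullv; rewrite capfv img_g => <-.
by rewrite addKn dimvf /dim /= mul1n.
Qed.

Lemma ann_inv_sysP (k : fieldType) s F (v : {mpoly k[3]}) :
  ann_inv_sys (inv_sys s F) v <->
  dual_ann F v /\ (forall g, mdeg g = s -> xy_or_xz g -> dual_ann [:: g] v).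
Proof.
split=> [h | [hF hg] G [-> // | [g [g_deg g_xy] ->]]]; last exact: hg.
by split=> [| g g_deg g_xy]; apply: h; [left | right; exists g].
Qed.

Lemma dual_ann_xy_xzP (k : fieldType) s i (v : {mpoly k[3]}) :
  (i <= s)%N -> v \is i.-homog ->
  (forall g, mdeg g = s -> xy_or_xz g -> dual_ann [:: g] v) <->
  (forall a, mdeg a = i -> xy_or_xz a -> v@_a = 0).
Proof.
move=> i_le_s hv; split=> [h a a_deg a_xy | h g g_deg g_xy].
  pose g := (a + mnm3 (s - i) 0 0)%MM.
  have g_deg : mdeg g = s by rewrite mdegD mdeg_mnm3 a_deg; lia.
  have g_xy : xy_or_xz g by rewrite /xy_or_xz !mnmDE mnm3y mnm3z !addn0.
  have le_g : (mnm3 (s - i) 0 0 <= g)%MM by rewrite /g addmC lem_addr.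
  have := h g g_deg g_xy 'X_[mnm3 (s - i) 0 0].
  by rewrite /pairing big_seq1 mcoeffXM le_g addmK.
apply/(dual_ann_dhomogP _ hv) => [g' | b b_deg]; first by rewrite mem_seq1 => /eqP ->.
rewrite /pairing big_seq1 mcoeffXM; case: ifP => // b_le_g.
apply: h; first by rewrite mdeg_subm // g_deg; lia.
move: g_xy; rewrite /xy_or_xz !mnmBE => /orP [/eqP -> | /eqP ->].
  by rewrite sub0n eqxx.
by rewrite sub0n eqxx orbT.
Qed.

(* In degree [i], the contractions [x^b ∘ F] of order [s - i] either lie in
   the span of the monomials of [k[x,y] ∪ k[x,z]] (second case of [bs_cover])
   or are among the [x^(bs t) ∘ F], which the monomials [x^(ps t)] show to be
   independent modulo that span; so [h_i = (2 i + 1) + r]. *)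
Section InverseSystemHilbert.
Variables (k : fieldType) (s i r : nat) (F : seq 'X_{1..3}).
Variables bs ps : 'I_r -> 'X_{1..3}.
Hypothesis F_deg : {in F, forall g, mdeg g = s}.
Hypothesis i_le_s : (i <= s)%N.
Hypothesis bs_deg : forall t, (mdeg (bs t) + i)%N = s.
Hypothesis ps_deg : forall t, mdeg (ps t) = i.
Hypothesis ps_yz : forall t, ~~ xy_or_xz (ps t).
Hypothesis pairing_bs_ps :
  forall t t', pairing F ('X_[bs t] * 'X_[ps t'] : {mpoly k[3]}) = (t == t')%:R.
Hypothesis bs_cover : forall b, (mdeg b + i)%N = s ->
  (exists t, b = bs t) \/ {in F, forall g, (b <= g)%MM -> xy_or_xz (g - b)}.

Definition inv_sys_coords (v : {mpoly k[3]}) : 'rV[k]_(2 * i + 1 + r) :=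
  \row_j match split j with
         | inl a => v@_(xy_xz_mnm i a)
         | inr t => pairing F ('X_[bs t] * v)
         end.

Lemma inv_sys_coords_is_linear : linear inv_sys_coords.
Proof.
move=> c u v; apply/matrixP => x j; rewrite !mxE.
case: (split j) => [a | t]; first by rewrite mcoeffD mcoeffZ.
by rewrite mulrDr pairingD -scalerAr pairingZ.
Qed.

HB.instance Definition _ :=
  GRing.isLinear.Build k {mpoly k[3]} 'rV[k]_(2 * i + 1 + r) _
    inv_sys_coords inv_sys_coords_is_linear.

Lemma inv_sys_coords_eq0 v : inv_sys_coords v = 0 <->
  (forall a : 'I_(2 * i + 1), v@_(xy_xz_mnm i a) = 0) /\
  (forall t, pairing F ('X_[bs t] * v) = 0).
Proof.
split=> [/matrixP h | [h0 h1]].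
  split=> [a | t]; first by have := h 0 (unsplit (inl a)); rewrite !mxE unsplitK.
  by have := h 0 (unsplit (inr t)); rewrite !mxE unsplitK.
by apply/matrixP => x j; rewrite !mxE; case: (split j).
Qed.

Lemma ann_inv_sys_coords v : v \is i.-homog ->
  ann_inv_sys (inv_sys s F) v <-> inv_sys_coords v = 0.
Proof.
move=> hv; rewrite inv_sys_coords_eq0 ann_inv_sysP (dual_ann_xy_xzP i_le_s hv).
rewrite (dual_ann_dhomogP F_deg hv); split=> [[hF hxy] | [hxy ht]].
  split=> [a | t]; last exact: hF.
  by apply: hxy; [apply: mdeg_xy_xz_mnm | apply: xy_or_xz_mnm].
have {}hxy a : mdeg a = i -> xy_or_xz a -> v@_a = 0.
  by move=> a_deg /(xy_xz_mnm_surj a_deg) [j lt_j ->]; exact: (hxy (Ordinal lt_j)).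
split=> // b b_deg; have [[t ->] // | b_cover] := bs_cover b_deg.
rewrite /pairing big_seq big1 // => g g_F; rewrite mcoeffXM; case: ifP => // b_le_g.
by apply: hxy (b_cover g g_F b_le_g); rewrite mdeg_subm // F_deg //; lia.
Qed.

Lemma inv_sys_coords_surj w : exists2 v, v \is i.-homog & inv_sys_coords v = w.
Proof.
pose u : {mpoly k[3]} :=
  \sum_(a < 2 * i + 1) w 0 (lshift r a) *: 'X_[xy_xz_mnm i a].
pose v := u +
  \sum_(t < r) (w 0 (rshift _ t) - pairing F ('X_[bs t] * u)) *: 'X_[ps t].
have Xi_homog m : mdeg m = i -> ('X_[m] : {mpoly k[3]}) \is i.-homog.
  by move=> m_deg; rewrite dhomogX; apply/eqP.
exists v.
  apply: rpredD; apply: rpred_sum => t _; apply: rpredZ; apply: Xi_homog => //.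
  exact: mdeg_xy_xz_mnm.
apply/matrixP => x j; rewrite mxE ord1 -(splitK j).
case: (split j) => [a | t]; rewrite unsplitK.
  rewrite mcoeffD !raddf_sum /= (bigD1 a) //= mcoeffZ mcoeffX eqxx mulr1.
  rewrite !big1 ?addr0 // => [t _ | a' a'_neq].
    rewrite mcoeffZ mcoeffX; case: eqP => [ps_t | _]; last by rewrite mulr0.
    by have := ps_yz t; rewrite ps_t xy_or_xz_mnm.
  rewrite mcoeffZ mcoeffX; case: eqP => [e | _]; last by rewrite mulr0.
  by case/eqP: a'_neq; apply: val_inj; exact: xy_xz_mnm_inj e.
rewrite /v; clear v; clearbody u.
rewrite mulrDr pairingD mulr_sumr pairing_sum (bigD1 t) //=.
rewrite -scalerAr pairingZ pairing_bs_ps eqxx mulr1 big1 ?addr0.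
  by rewrite addrC subrK.
move=> t' t'_neq.
by rewrite -scalerAr pairingZ pairing_bs_ps eq_sym (negbTE t'_neq) mulr0.
Qed.

Lemma hilb_inv_sys : hilb (@ann_inv_sys 3 k (inv_sys s F)) i (2 * i + 1 + r).
Proof. exact: hilb_of_coords ann_inv_sys_coords inv_sys_coords_surj. Qed.

End InverseSystemHilbert.

Ltac eval_nat_tests :=
  repeat match goal with
  | |- context [ (?a == ?b :> nat) ] =>
      first [ have -> : (a == b) = true by apply/eqP; lia
            | have -> : (a == b) = false by apply/eqP; lia ]
  | |- context [ (?a <= ?b)%N ] =>
      first [ have -> : (a <= b)%N = true by apply/idP; lia
            | have -> : (a <= b)%N = false by apply/negP; lia ]
  end.

Definition dual_gen (d : nat) : seq 'X_{1..3} :=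
  [:: mnm3 2 2 (d - 3); mnm3 0 d 1; mnm3 0 1 d].

Section Example.
Variables (k : fieldType) (d : nat).
Hypothesis d_ge5 : (5 <= d)%N.

Local Notation I := (@ann_inv_sys 3 k (inv_sys d.+1 (dual_gen d))).

Lemma dual_gen_deg : {in dual_gen d, forall g, mdeg g = d.+1}.
Proof. by move=> g; rewrite !inE => /or3P [] /eqP ->; rewrite mdeg_mnm3; lia. Qed.

Lemma pairing_dual_gen a b c a' b' c' :
  pairing (dual_gen d) ('X_[mnm3 a b c] * 'X_[mnm3 a' b' c'] : {mpoly k[3]}) =
  [&& a + a' == 2, b + b' == 2 & c + c' == d - 3]%N%:R +
  [&& a + a' == 0, b + b' == d & c + c' == 1]%N%:R +
  [&& a + a' == 0, b + b' == 1 & c + c' == d]%N%:R.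
Proof. by rewrite pairingXX !big_cons big_nil mnm3D !eq_mnm3 addr0 addrA. Qed.

Lemma hilb_example_1 : hilb I 1 3.
Proof.
apply: (@hilb_inv_sys k d.+1 1 0 _ (fun _ => 0%MM) (fun _ => 0%MM)
  dual_gen_deg (ltn0Sn d)); try by case.
move=> b b_deg; right => g g_F b_le_g.
have : mdeg (g - b) = 1%N by rewrite mdeg_subm // dual_gen_deg //; lia.
rewrite [(g - b)%MM]mnm3_eta mdeg_mnm3 /xy_or_xz mnm3y mnm3z.
by case: ((g - b)%MM iy) => [|y]; case: ((g - b)%MM iz) => [|z] //=; lia.
Qed.

Lemma hilb_example_top : hilb I d.+1 (2 * d + 4).
Proof.
have -> : (2 * d + 4 = 2 * d.+1 + 1 + 1)%N by lia.
apply: (@hilb_inv_sys k d.+1 d.+1 1 _ (fun _ => mnm3 0 0 0) (fun _ => mnm3 2 2 (d - 3))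
  dual_gen_deg (leqnn _)).
- by move=> t; rewrite mdeg_mnm3.
- by move=> t; rewrite mdeg_mnm3; lia.
- by move=> t; rewrite /xy_or_xz mnm3y mnm3z; eval_nat_tests.
- move=> t t'; rewrite !ord1 pairing_dual_gen /=.
  by eval_nat_tests; rewrite /= ?addr0 ?add0r.
- move=> b; rewrite [b]mnm3_eta mdeg_mnm3 => b_deg; left; exists ord0.
  by congr mnm3; lia.
Qed.

Definition bs_mid (t : 'I_3) := nth 0%MM [:: mnm3 1 0 0; mnm3 0 1 0; mnm3 0 0 1] t.
Definition ps_mid (t : 'I_3) :=
  nth 0%MM [:: mnm3 1 2 (d - 3); mnm3 2 1 (d - 3); mnm3 2 2 (d - 4)] t.

Lemma hilb_example_mid : hilb I d (2 * d + 4).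
Proof.
have -> : (2 * d + 4 = 2 * d + 1 + 3)%N by lia.
apply: (@hilb_inv_sys k d.+1 d 3 _ bs_mid ps_mid dual_gen_deg (leqnSn _)).
- by case=> [[|[|[|?]]] ?] //; rewrite /bs_mid /= mdeg_mnm3.
- by case=> [[|[|[|?]]] ?] //; rewrite /ps_mid /= mdeg_mnm3; lia.
- by case=> [[|[|[|?]]] ?] //; rewrite /ps_mid /xy_or_xz /= mnm3y mnm3z; eval_nat_tests.
- case=> [[|[|[|?]]] ?] //; case=> [[|[|[|?]]] ?] //;
    by rewrite /bs_mid /ps_mid /= pairing_dual_gen /=;
    eval_nat_tests; rewrite /= ?addr0 ?add0r.
- move=> b; rewrite [b]mnm3_eta mdeg_mnm3 => b_deg; left.
  move: (b ix) (b iy) (b iz) b_deg => [|[|x]] [|[|y]] [|[|z]] b_deg; try lia.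
  + by exists (@Ordinal 3 2 isT).
  + by exists (@Ordinal 3 1 isT).
  + by exists (@Ordinal 3 0 isT).
Qed.

Definition bs_low (t : 'I_6) :=
  nth 0%MM [:: mnm3 2 0 0; mnm3 1 1 0; mnm3 1 0 1; mnm3 0 2 0; mnm3 0 1 1; mnm3 0 0 2] t.
Definition ps_low (t : 'I_6) :=
  nth 0%MM [:: mnm3 0 2 (d - 3); mnm3 1 1 (d - 3); mnm3 1 2 (d - 4); mnm3 0 (d - 2) 1;
               mnm3 2 1 (d - 4); mnm3 0 1 (d - 2)] t.

Lemma hilb_example_low : hilb I d.-1 (2 * d + 5).
Proof.
have -> : (2 * d + 5 = 2 * d.-1 + 1 + 6)%N by lia.
apply: (@hilb_inv_sys k d.+1 d.-1 6 _ bs_low ps_low dual_gen_deg); first lia.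
- by case=> [[|[|[|[|[|[|?]]]]]] ?] //; rewrite /bs_low /= mdeg_mnm3; lia.
- by case=> [[|[|[|[|[|[|?]]]]]] ?] //; rewrite /ps_low /= mdeg_mnm3; lia.
- case=> [[|[|[|[|[|[|?]]]]]] ?] //;
    by rewrite /ps_low /xy_or_xz /= mnm3y mnm3z; eval_nat_tests.
- case=> [[|[|[|[|[|[|?]]]]]] ?] //; case=> [[|[|[|[|[|[|?]]]]]] ?] //;
    by rewrite /bs_low /ps_low /= pairing_dual_gen /=;
    eval_nat_tests; rewrite /= ?addr0 ?add0r.
- move=> b; rewrite [b]mnm3_eta mdeg_mnm3 => b_deg; left.
  move: (b ix) (b iy) (b iz) b_deg => [|[|[|x]]] [|[|[|y]]] [|[|[|z]]] b_deg; try lia.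
  + by exists (@Ordinal 6 5 isT).
  + by exists (@Ordinal 6 4 isT).
  + by exists (@Ordinal 6 3 isT).
  + by exists (@Ordinal 6 2 isT).
  + by exists (@Ordinal 6 1 isT).
  + by exists (@Ordinal 6 0 isT).
Qed.

End Example.

Theorem proposition4p9 (k : fieldType) (char0 : [pchar k] =i pred0)
  (d : nat) (hd : (5 <= d)%N) :
  exists I : {mpoly k[3]} -> Prop,
    [/\ homog_ideal I, artinian I, level I, hilb I 1 3 &
      exists a : nat,
        [/\ hilb I d.-1 a, hilb I d (2 * d + 4), hilb I d.+1 (2 * d + 4)
          & (2 * d + 4 < a)%N]].
Proof.
have gens_deg := inv_sys_deg (dual_gen_deg hd).
exists (@ann_inv_sys 3 k (inv_sys d.+1 (dual_gen d))); split.
- exact: ann_inv_sys_homog_ideal gens_deg.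
- exact: ann_inv_sys_artinian gens_deg.
- exact: ann_inv_sys_level gens_deg.
- exact: hilb_example_1.
- exists (2 * d + 5)%N; split.
  + exact: hilb_example_low.
  + exact: hilb_example_mid.
  + exact: hilb_example_top.
  + by rewrite ltn_add2l.
Qed.
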